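(* Let $a_0<a_1<\dots<a_n$ be positive integers with $\gcd(a_0,\dots,a_n)=1$ and let $t\in\mathbb{Z}_{\ge0}$. If the equation $a_0x_0+\dots+a_nx_n=t$ has a solution $x\in\mathbb{Z}_{\ge 0}^{n+1}$, then it has a solution $x\in\mathbb{Z}_{\ge0}^{n+1}$ whose support $\mathrm{supp}(x)=\{i: x_i\neq 0\}$ satisfies $|\mathrm{supp}(x)|\le \log_2(a_0)+1$. *)

From mathcomp Require Import all_boot.
Set Implicit Arguments. Unset Strict Implicit. Unset Printing Implicit Defensive.

Definition supp (m : nat) (x : 'I_m -> nat) : {set 'I_m} := [set i | x i != 0].

Definition lin (m : nat) (a x : 'I_m -> nat) : nat := \sum_(i < m) a i * x i.

From mathcomp Require Import all_boot zify.

Set Implicit Arguments.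
Unset Strict Implicit.
Unset Printing Implicit Defensive.

(* Write S for the support of x outside the index 0, and suppose 2^|S| > a_0.
   By pigeonhole two distinct subsets of S have weight sums congruent modulo
   a_0; removing their intersection gives disjoint U1, U2 within S, with U1
   nonempty and sum_U1 a = sum_U2 a + q a_0.  Lowering x by c := min_U1 x on
   U1, raising it by c on U2 and by c q at the index 0 preserves a . x and
   kills at least one coordinate of S.  Iterating, |S| <= log2 a_0, and the
   index 0 adds at most one to the support. *)

Section SubsetSums.
Variables (I : finType) (a : I -> nat) (d : nat).
Hypothesis d_gt0 : 0 < d.

Lemma subset_sums_eq_mod (S : {set I}) : d < 2 ^ #|S| ->
  exists T1 T2 : {set I}, [/\ T1 \subset S, T2 \subset S, T1 != T2
    & \sum_(i in T1) a i = \sum_(i in T2) a i %[mod d]].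
Proof.
move=> d_lt.
pose sum_mod (T : {set I}) : 'I_d := Ordinal (ltn_pmod (\sum_(i in T) a i) d_gt0).
have /dinjectivePn[T1 T1S [T2 /andP[T21 T2S] /(congr1 val) eqT]] :
    ~~ dinjectiveb sum_mod (powerset S).
  apply/negP => /dinjectiveP /leq_card_in.
  by rewrite card_powerset card_ord leqNgt d_lt.
by exists T1, T2; rewrite -!powersetE eq_sym.
Qed.

Hypothesis a_gt0 : forall i, 0 < a i.

Lemma sum_set_eq0 (A : {set I}) : \sum_(i in A) a i = 0 -> A = set0.
Proof.
move=> A0; apply/setP => i; rewrite inE; apply/negP => iA.
by move: A0; rewrite (bigD1 i) //=; have := a_gt0 i; lia.
Qed.

Lemma disjoint_subset_sums_dvd (S : {set I}) : d < 2 ^ #|S| ->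
  exists U1 U2 : {set I}, [/\ U1 \subset S, U2 \subset S, [disjoint U1 & U2],
    U1 != set0 & exists q, \sum_(i in U1) a i = \sum_(i in U2) a i + q * d].
Proof.
move=> /subset_sums_eq_mod[T1 [T2 [T1S T2S T12 eqT]]].
wlog le_sum : T1 T2 T1S T2S T12 eqT /
    \sum_(i in T2 :\: T1) a i <= \sum_(i in T1 :\: T2) a i.
  move=> hwlog; case: (leqP (\sum_(i in T2 :\: T1) a i) (\sum_(i in T1 :\: T2) a i)).
    exact: hwlog.
  by move/ltnW; apply: hwlog; rewrite // eq_sym.
have split_sum (T T' : {set I}) :
    \sum_(i in T) a i = \sum_(i in T :&: T') a i + \sum_(i in T :\: T') a i.
  exact: big_setID.
exists (T1 :\: T2), (T2 :\: T1); split.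
- exact: subset_trans (subsetDl _ _) T1S.
- exact: subset_trans (subsetDl _ _) T2S.
- rewrite -setI_eq0; apply/eqP/setP => i; rewrite !inE.
  by case: (i \in T1); case: (i \in T2).
- apply: contraNneq T12 => T120.
  have /sum_set_eq0 T210 : \sum_(i in T2 :\: T1) a i = 0.
    by move: le_sum; rewrite T120 big_set0; lia.
  by rewrite eqEsubset -!setD_eq0; apply/andP; split; apply/eqP.
- move: eqT; rewrite (split_sum T1 T2) (split_sum T2 T1) setIC => /eqP.
  rewrite eqn_modDl eqn_mod_dvd // => /dvdnP[q q_eq].
  by exists q; rewrite -q_eq subnKC.
Qed.

End SubsetSums.

Section Exchange.
Variables (m : nat) (a : 'I_m -> nat).

Lemma eq_lin (x y : 'I_m -> nat) : x =1 y -> lin a x = lin a y.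
Proof. by move=> xy; apply: eq_bigr => i _; rewrite xy. Qed.

Lemma lin_add (x y : 'I_m -> nat) : lin a (fun i => x i + y i) = lin a x + lin a y.
Proof. by rewrite /lin -big_split; apply: eq_bigr => i _; rewrite mulnDr. Qed.

Lemma lin_indicator (c : nat) (U : {set 'I_m}) :
  lin a (fun i => c * (i \in U)) = c * \sum_(i in U) a i.
Proof.
rewrite /lin big_distrr [RHS]big_mkcond /=; apply: eq_bigr => i _.
by case: (i \in U); rewrite ?muln0 ?muln1 // mulnC.
Qed.

Lemma lin_exchange (x : 'I_m -> nat) (i0 : 'I_m) (U1 U2 : {set 'I_m}) (q : nat) :
  U1 \subset supp x :\ i0 -> U2 \subset supp x :\ i0 -> [disjoint U1 & U2] ->
  U1 != set0 -> \sum_(i in U1) a i = \sum_(i in U2) a i + q * a i0 ->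
  exists y, lin a y = lin a x /\ #|supp y :\ i0| < #|supp x :\ i0|.
Proof.
move=> U1S U2S U12 /set0Pn[j jU1] sumU.
have [k kU1 k_min] := arg_minnP x jU1; set c := x k in k_min.
have i0U (U : {set 'I_m}) : U \subset supp x :\ i0 -> i0 \notin U.
  by move=> US; apply: contraL isT => /(subsetP US); rewrite !inE eqxx.
have notU2 i : i \in U1 -> i \notin U2.
  by move=> iU1; apply: contraL U12 => iU2; apply/pred0Pn; exists i; apply/andP.
pose y i := if i == i0 then x i + c * q else if i \in U1 then x i - c
            else if i \in U2 then x i + c else x i.
have y_shift i : y i + c * (i \in U1) = x i + c * (i \in U2) + c * q * (i \in [set i0]).
  rewrite /y in_set1; case: eqP => [->|_].
    by rewrite (negPf (i0U _ U1S)) (negPf (i0U _ U2S)); lia.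
  case: ifP => [iU1|_]; last by case: (i \in U2); lia.
  by rewrite (negPf (notU2 i iU1)); have := k_min i iU1; lia.
exists y; split.
  have := eq_lin y_shift; rewrite !lin_add !lin_indicator big_set1 sumU; lia.
have suppy : supp y :\ i0 \subset (supp x :\ i0) :\ k.
  apply/subsetP => i; rewrite !inE /y => /andP[/negPf -> /=].
  case: ifP => [iU1 yi|iU1].
    apply/andP; split; last by lia.
    by apply: contraNneq yi => ->; rewrite subnn.
  have ik : i != k by apply: contraFneq iU1 => ->.
  case: ifP => [iU2 _|_ xi]; last by rewrite ik xi.
  by have := subsetP U2S i iU2; rewrite !inE ik => /andP[_ ->].
apply: leq_ltn_trans (subset_leq_card suppy) _.
by rewrite [X in _ < X](cardsD1 k) (subsetP U1S k kU1).
Qed.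

Hypothesis a_gt0 : forall i, 0 < a i.

Lemma support_reduction (x : 'I_m -> nat) (i0 : 'I_m) :
  exists y, lin a y = lin a x /\ #|supp y :\ i0| <= trunc_log 2 (a i0).
Proof.
have [k] := ubnP #|supp x :\ i0|; elim: k x => // k IH x lt_k.
case: (leqP #|supp x :\ i0| (trunc_log 2 (a i0))) => [small|big].
  by exists x.
have a0_lt : a i0 < 2 ^ #|supp x :\ i0|.
  by apply: leq_trans (@trunc_log_ltn 2 _ isT) _; rewrite leq_exp2l.
have [U1 [U2 [U1S U2S U12 U1n0 [q sumU]]]] :=
  disjoint_subset_sums_dvd (a_gt0 i0) a_gt0 a0_lt.
have [y [yx lt_y]] := lin_exchange U1S U2S U12 U1n0 sumU.
have [z [zy small]] := IH y (leq_trans lt_y lt_k).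
by exists z; rewrite zy yx.
Qed.

End Exchange.

Theorem corollary1 (n : nat) (a : 'I_n.+1 -> nat)
  (a_pos : 0 < a ord0)
  (a_incr : forall i j : 'I_n.+1, (i < j)%N -> a i < a j)
  (a_gcd : \big[gcdn/0]_(i < n.+1) a i = 1)
  (t : nat) :
  (exists x : 'I_n.+1 -> nat, lin a x = t) ->
  exists x : 'I_n.+1 -> nat, lin a x = t /\ #|supp x| <= trunc_log 2 (a ord0) + 1.
Proof.
have a_gt0 i : 0 < a i.
  case: (posnP i) => [i0|i_gt0]; last exact: ltn_trans a_pos (a_incr ord0 i i_gt0).
  by rewrite (_ : i = ord0) //; apply: val_inj.
move=> [x <-]; have [y [yx small]] := support_reduction a_gt0 x ord0.
exists y; split => //.
by rewrite (cardsD1 ord0) addnC leq_add // leq_b1.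
Qed.
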